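(* Let $|\psi\rangle,|\phi\rangle\in\mathcal{H}'$ be pure states with $\mathcal{C}(|\phi\rangle)>\mathcal{C}(|\psi\rangle)$. Then the maximum probability of transforming $|\psi\rangle$ into $|\phi\rangle$ using Z$_2$-invariant operations is $$P(|\psi\rangle\to|\phi\rangle)=\frac{\mathcal{C}(|\psi\rangle)}{\mathcal{C}(|\phi\rangle)}.$$
   Context: $\mathcal{H}'$ is a two-dimensional Hilbert space with orthonormal basis $|0\rangle,|1\rangle$; $\pi=|0\rangle\langle0|-|1\rangle\langle1|$. A Z$_2$-invariant operation is a completely positive, trace-nonincreasing linear map $\mathcal{E}$ on operators on $\mathcal{H}'$ with $\mathcal{E}(\pi X\pi)=\pi\mathcal{E}(X)\pi$ for all $X$. The probability of transforming $|\psi\rangle$ into $|\phi\rangle$ is the largest $\lambda$ such that some Z$_2$-invariant operation $\mathcal{E}$ satisfies $\mathcal{E}(|\psi\rangle\langle\psi|)=\lambda|\phi\rangle\langle\phi|$. For a pure state $|\chi\rangle$, $\mathcal{C}(|\chi\rangle)=2\min\{|\langle0|\chi\rangle|^2,|\langle1|\chi\rangle|^2\}$. *)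

(* complex numbers R[i] over a real closed field R
   (mathcomp-real-closed); operators on H' = C^2 are 2x2 matrices. *)
From HB Require Import structures.
From mathcomp Require Import all_boot all_order all_algebra.
From mathcomp Require Import complex.
Import ComplexField.Normc.
Set Implicit Arguments. Unset Strict Implicit. Unset Printing Implicit Defensive.
Import Order.TTheory GRing.Theory Num.Theory.
Local Open Scope ring_scope.
Local Open Scope complex_scope.

Section QDefs.
Variable R : rcfType.
Local Notation C := R[i].

Definition psdF (T : finType) (X : T -> T -> C) : Prop :=
  forall v : T -> C, 0 <= \sum_(i : T) \sum_(j : T) (v i)^* * X i j * v j.

Definition psd (X : 'M[C]_2) : Prop := psdF (fun i j => X i j).

(* (id_n (x) E) applied to an operator on C^n (x) C^2, seen as a function
   of pairs of indices (a, k) with a : 'I_n, k : 'I_2 *)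
Definition ampl (n : nat) (E : 'M[C]_2 -> 'M[C]_2)
    (X : ('I_n * 'I_2)%type -> ('I_n * 'I_2)%type -> C) :
    ('I_n * 'I_2)%type -> ('I_n * 'I_2)%type -> C :=
  fun p q => E (\matrix_(k, l) X (p.1, k) (q.1, l)) p.2 q.2.

Definition completely_positive (E : 'M[C]_2 -> 'M[C]_2) : Prop :=
  forall (n : nat) (X : ('I_n * 'I_2)%type -> ('I_n * 'I_2)%type -> C),
    psdF X -> psdF (ampl E X).

Definition trace_nonincreasing (E : 'M[C]_2 -> 'M[C]_2) : Prop :=
  forall X : 'M[C]_2, psd X -> \tr (E X) <= \tr X.

Definition piZ2 : 'M[C]_2 := \matrix_(i, j) (if i == j then
                                (if i == 0 then 1 else -1) else 0).

Definition Z2_invariant (E : 'M[C]_2 -> 'M[C]_2) : Prop :=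
  forall X : 'M[C]_2, E (piZ2 *m X *m piZ2) = piZ2 *m E X *m piZ2.

Definition Z2_operation (E : {linear 'M[C]_2 -> 'M[C]_2}) : Prop :=
  [/\ completely_positive E, trace_nonincreasing E & Z2_invariant E].

Definition pure_state (psi : 'cV[C]_2) : Prop :=
  normc (psi 0 0) ^+ 2 + normc (psi 1 0) ^+ 2 = 1.

Definition proj (psi : 'cV[C]_2) : 'M[C]_2 := psi *m (map_mx conjc psi)^T.

Definition coh (chi : 'cV[C]_2) : R :=
  2 * Num.min (normc (chi 0 0) ^+ 2) (normc (chi 1 0) ^+ 2).

Definition achievable (psi phi : 'cV[C]_2) (lam : R) : Prop :=
  exists E : {linear 'M[C]_2 -> 'M[C]_2},
    Z2_operation E /\ E (proj psi) = lam%:C *: proj phi.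

Definition is_max_prob (psi phi : 'cV[C]_2) (p : R) : Prop :=
  achievable psi phi p /\ forall lam, achievable psi phi lam -> lam <= p.

End QDefs.

(* Z2-covariance forces E to map |i><i| to a diagonal matrix diag(p_i0, p_i1)
   and |0><1|, |1><0| to off-diagonal ones, so the Choi matrix of E splits into
   two 2x2 blocks.  Write x, y and u, v for the populations of psi and phi.
   From E(|psi><psi|) = lam |phi><phi| we read off x p_0k + y p_1k = lam u_k,
   and positivity of the Choi blocks, evaluated at vectors built from psi and
   phi, gives a family of quadratic inequalities that is tight at one point;
   hence x v p_00 = y u p_11 and x u p_01 = y v p_10.  Then
   lam u v = x (v p_00 + u p_01) <= x max(u, v), and likewise with y, so
   lam <= min(x, y) / min(u, v) = C(psi) / C(phi).  The bound is attained by a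
   single diagonal or antidiagonal Kraus operator mapping psi to
   sqrt(lam) phi. *)

From HB Require Import structures.
From mathcomp Require Import all_boot all_order all_algebra.
From mathcomp Require Import complex ring lra.
Import Order.TTheory GRing.Theory Num.Theory.
Import ComplexField.Normc.

Set Implicit Arguments.
Unset Strict Implicit.
Unset Printing Implicit Defensive.

Local Open Scope ring_scope.
Local Open Scope complex_scope.

Lemma big_ord2 (V : nmodType) (F : 'I_2 -> V) : \sum_(i < 2) F i = F 0 + F 1.
Proof. by rewrite !big_ord_recl big_ord0 addr0; congr (_ + F _); apply: val_inj. Qed.

Lemma ord2_cases (i : 'I_2) : i = 0 \/ i = 1.
Proof. by case: i => [[|[|//]] Hi]; [left|right]; apply: val_inj. Qed.

Lemma ord2E : (rev_ord (0 : 'I_2) = 1) * (rev_ord (1 : 'I_2) = 0)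
  * (((0 : 'I_2) == 1) = false) * (((1 : 'I_2) == 0) = false).
Proof. by do !split; apply: val_inj. Qed.

Lemma eqN_eq0 (V : numDomainType) (z : V) : z = - z -> z = 0.
Proof.
move=> h; have : z *+ 2 == 0 by rewrite mulr2n {2}h subrr.
by rewrite mulrn_eq0 => /eqP.
Qed.

Section Qubit.
Variable R : rcfType.
Local Notation C := R[i].

(* [rmorphD] and friends would leave the canonical morphism structure in the
   result, which [ring] and later rewrites do not recognise as [conjc]/[_%:C] *)
Lemma conjcD (x y : C) : conjc (x + y) = conjc x + conjc y.
Proof. exact: raddfD. Qed.

Lemma conjcN (x : C) : conjc (- x) = - conjc x.
Proof. exact: raddfN. Qed.

Lemma conjcM (x y : C) : conjc (x * y) = conjc x * conjc y.
Proof. exact: rmorphM. Qed.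

Lemma real_complexD (x y : R) : (x + y)%:C = x%:C + y%:C :> C.
Proof. exact: rmorphD. Qed.

Lemma real_complexM (x y : R) : (x * y)%:C = x%:C * y%:C :> C.
Proof. exact: rmorphM. Qed.

Lemma real_complexX (x : R) n : (x ^+ n)%:C = x%:C ^+ n :> C.
Proof. exact: rmorphXn. Qed.

Lemma mulcJ_normc (z : C) : z * conjc z = (normc z ^+ 2)%:C.
Proof.
case: z => a b /=; rewrite sqr_sqrtr ?addr_ge0 ?sqr_ge0 //.
by simpc; rewrite [b * a]mulrC addNr !expr2.
Qed.

Lemma normc_ge0 (z : C) : 0 <= normc z.
Proof. by case: z => a b; apply: sqrtr_ge0. Qed.

Lemma normc_real (m : R) : 0 <= m -> normc m%:C = m.
Proof. by move=> m_ge0 /=; rewrite expr0n addr0 sqrtr_sqr ger0_norm. Qed.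

Lemma ge0_complexE (z : C) : 0 <= z -> z = (complex.Re z)%:C.
Proof. by case: z => a b /ger0_Im /= ->. Qed.

Lemma mulmx2E m n (A : 'M[C]_(m, 2)) (B : 'M[C]_(2, n)) i j :
  (A *m B) i j = A i 0 * B 0 j + A i 1 * B 1 j.
Proof. by rewrite mxE big_ord2. Qed.

Lemma projE (psi : 'cV[C]_2) i j : proj psi i j = psi i 0 * conjc (psi j 0).
Proof. by rewrite mxE big_ord1 !mxE. Qed.

Lemma proj_scale (c : C) (psi : 'cV[C]_2) : proj (c *: psi) = (c * conjc c) *: proj psi.
Proof. by apply/matrixP => i j; rewrite [RHS]mxE !projE !mxE conjcM; ring. Qed.

Lemma sum_pair (I J : finType) (G : (I * J)%type -> C) :
  \sum_p G p = \sum_i \sum_j G (i, j).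
Proof. by rewrite pair_big; apply: eq_bigr => -[]. Qed.

Lemma sum_pair2 (I J : finType) (F : (I * J)%type -> (I * J)%type -> C) :
  \sum_p \sum_q F p q = \sum_a \sum_b \sum_i \sum_j F (a, i) (b, j).
Proof.
rewrite sum_pair; apply: eq_bigr => a _.
under eq_bigr => i _ do rewrite sum_pair.
by rewrite exchange_big.
Qed.

(* [psdF] is stated with [Num.conj], the rest of the development uses [conjc] *)
Lemma psdFE (T : finType) (X : T -> T -> C) :
  psdF X <-> forall v : T -> C, 0 <= \sum_i \sum_j conjc (v i) * X i j * v j.
Proof. by []. Qed.

Lemma psd_diag_ge0 (X : 'M[C]_2) i : psd X -> 0 <= X i i.
Proof.
move=> /psdFE /(_ (fun j => if j == i then 1 else 0)).
case: (ord2_cases i) => ->; rewrite !big_ord2 ?ord2E ?eqxx; cbv beta iota;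
  by rewrite conjc0 conjc1 !(mul0r, mulr0, mul1r, mulr1, addr0, add0r).
Qed.

Lemma psd_delta_diag i : psd (delta_mx i i : 'M[C]_2).
Proof.
apply/psdFE => v; apply: le_trans (mulcJ_ge0 (v i)) _.
rewrite le_eqVlt; apply/orP; left; apply/eqP.
by case: (ord2_cases i) => ->; rewrite !big_ord2 !mxE /=; ring.
Qed.
End Qubit.

Section RealInequalities.
Variable R : realFieldType.

Lemma eq_of_quadratic_ge0 (A B : R) :
  0 <= A -> (forall t, 0 <= (t - 1) * (t * A - B)) -> A = B.
Proof.
move=> A_ge0 hq; apply/eqP; rewrite -subr_eq0 -sqrf_eq0 eq_le sqr_ge0 andbT.
have A1_neq0 : A + 1 != 0 by rewrite gt_eqF // ltr_wpDl.
(* the quadratic is [-(A - B)^2 / (A + 1)^2] at this point *)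
have := hq (1 - (A - B) / (A + 1)).
have -> : (1 - (A - B) / (A + 1) - 1) * ((1 - (A - B) / (A + 1)) * A - B) =
          - ((A - B) ^+ 2 / (A + 1) ^+ 2) by field.
by rewrite oppr_ge0 pmulr_lle0 // invr_gt0 exprn_gt0 // lt_def A1_neq0 /= addr_ge0.
Qed.

Lemma choi_ineq_balance (x y u v p0 p1 q0 q1 lam : R) :
  0 <= x -> 0 <= y -> 0 <= u -> 0 <= v ->
  0 <= p0 -> 0 <= p1 -> 0 <= q0 -> 0 <= q1 ->
  x * p0 + y * q0 = lam * u -> x * p1 + y * q1 = lam * v ->
  (forall al be ga de : R,
     0 <= al ^+ 2 * be ^+ 2 * x * v * p0 + al ^+ 2 * de ^+ 2 * x * u * p1
          + be ^+ 2 * ga ^+ 2 * y * v * q0 + ga ^+ 2 * de ^+ 2 * y * u * q1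
          - 2 * (al * be * ga * de) * lam * u * v) ->
  x * v * p0 = y * u * q1 /\ x * u * p1 = y * v * q0.
Proof.
move=> x0 y0 u0 v0 p00 p10 q00 q10 e0 e1 hq.
have e2 : 2 * lam * u * v = v * (x * p0 + y * q0) + u * (x * p1 + y * q1).
  by rewrite e0 e1; ring.
have E1 : x * v * p0 + x * u * p1 = y * v * q0 + y * u * q1.
  apply: eq_of_quadratic_ge0 => [|t]; first by rewrite addr_ge0 // !mulr_ge0.
  apply: le_trans (hq t 1 1 1) _; rewrite le_eqVlt; apply/orP; left; apply/eqP.
  rewrite (_ : 2 * (t * 1 * 1 * 1) * lam * u * v = t * (2 * lam * u * v)); last by ring.
  by rewrite e2; ring.
have E2 : x * v * p0 + y * v * q0 = x * u * p1 + y * u * q1.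
  apply: eq_of_quadratic_ge0 => [|t]; first by rewrite addr_ge0 // !mulr_ge0.
  apply: le_trans (hq 1 t 1 1) _; rewrite le_eqVlt; apply/orP; left; apply/eqP.
  rewrite (_ : 2 * (1 * t * 1 * 1) * lam * u * v = t * (2 * lam * u * v)); last by ring.
  by rewrite e2; ring.
split; lra.
Qed.

Lemma balance_min_le (x y u v p0 p1 q0 q1 lam : R) :
  0 <= x -> 0 <= y -> 0 < Num.min u v ->
  0 <= p0 -> 0 <= p1 -> 0 <= q0 -> 0 <= q1 -> p0 + p1 <= 1 -> q0 + q1 <= 1 ->
  x * p0 + y * q0 = lam * u -> x * p1 + y * q1 = lam * v ->
  x * v * p0 = y * u * q1 -> x * u * p1 = y * v * q0 ->
  lam * Num.min u v <= Num.min x y.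
Proof.
wlog le_uv : u v p0 p1 q0 q1 / u <= v => [hwlog|].
  case/orP: (le_total u v) => [le_uv|le_vu]; first exact: hwlog.
  rewrite minC => x0 y0 min_gt0 p00 p10 q00 q10 sp sq e0 e1 b0 b1.
  by apply: (hwlog v u p1 p0 q1 q0) => //; rewrite addrC.
rewrite (min_l le_uv) => x0 y0 u_gt0 p00 p10 q00 q10 sp sq e0 e1 b0 b1.
have v_gt0 : 0 < v by apply: lt_le_trans le_uv.
rewrite le_min; apply/andP; split; rewrite -(ler_pM2r v_gt0).
- have -> : lam * u * v = x * (v * p0 + u * p1) by nra.
  by apply: ler_wpM2l => //; nra.
- have -> : lam * u * v = y * (v * q0 + u * q1) by nra.
  by apply: ler_wpM2l => //; nra.
Qed.

Lemma min_ratio_dominated (x y u v : R) :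
  0 <= x -> 0 <= y -> 0 <= u -> 0 <= v -> x + y = 1 -> u + v = 1 ->
  Num.min x y < Num.min u v ->
  let r := Num.min x y / Num.min u v in
  (r * u <= x /\ r * v <= y) \/ (r * u <= y /\ r * v <= x).
Proof.
move=> x0 y0 u0 v0 xy1 uv1 lt_min r.
have min_gt0 : 0 < Num.min u v by apply: le_lt_trans lt_min; rewrite le_min x0.
have r_min : r * Num.min u v = Num.min x y by rewrite /r divfK ?gt_eqF.
move: lt_min min_gt0 r_min.
have [le_xy|/ltW le_yx] := lerP x y; have [le_uv|/ltW le_vu] := lerP u v;
  rewrite ?(min_l le_xy) ?(min_r le_yx) ?(min_l le_uv) ?(min_r le_vu) => lt gt0 e;
  [left | right | right | left]; split; nra.
Qed.
End RealInequalities.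

Section KrausOperations.
Variable R : rcfType.
Local Notation C := R[i].

Definition kraus (K X : 'M[C]_2) : 'M[C]_2 := K *m X *m (map_mx conjc K)^T.

Lemma kraus_is_linear K : linear (kraus K).
Proof. by move=> a X Y; rewrite /kraus mulmxDr mulmxDl -scalemxAr -scalemxAl. Qed.

HB.instance Definition _ K :=
  GRing.isLinear.Build C 'M[C]_2 'M[C]_2 *:%R (kraus K) (kraus_is_linear K).

Lemma kraus_cp K : completely_positive (kraus K).
Proof.
move=> n X /psdFE HX; apply/psdFE => v.
pose w p := \sum_(j < 2) conjc (K j p.2) * v (p.1, j).
have := HX w; congr (_ <= _).
rewrite !sum_pair2; apply: eq_bigr => a _; apply: eq_bigr => b _.
rewrite /ampl /w /kraus /= !big_ord2 !mxE !big_ord2 !mxE !big_ord2 !mxE /=.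
rewrite !(conjcD, conjcM, conjcK); ring.
Qed.

Lemma kraus_proj K (psi : 'cV[C]_2) : kraus K (proj psi) = proj (K *m psi).
Proof. by rewrite /kraus /proj map_mxM trmx_mul !mulmxA. Qed.

Definition swap_if (swap : bool) (i : 'I_2) : 'I_2 := if swap then rev_ord i else i.

Definition monomial_mx (swap : bool) (k : 'I_2 -> C) : 'M[C]_2 :=
  \matrix_(i, j) if j == swap_if swap i then k i else 0.

Lemma monomial_mulmx swap k (psi : 'cV[C]_2) i :
  (monomial_mx swap k *m psi) i 0 = k i * psi (swap_if swap i) 0.
Proof.
rewrite mulmx2E !mxE.
by case: swap; case: (ord2_cases i) => ->; rewrite /= ?ord2E ?mul0r ?add0r ?addr0.
Qed.

Lemma kraus_monomial_Z2_invariant swap k : Z2_invariant (kraus (monomial_mx swap k)).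
Proof.
move=> X; apply/matrixP => i j.
case: swap; case: (ord2_cases i) => ->; case: (ord2_cases j) => ->;
  rewrite /kraus !mulmx2E !mxE /swap_if ?ord2E ?eqxx; cbv beta iota;
  rewrite ?conjc0; ring.
Qed.

Lemma kraus_monomial_trace_nonincreasing swap k :
  (forall i, normc (k i) ^+ 2 <= 1) -> trace_nonincreasing (kraus (monomial_mx swap k)).
Proof.
move=> hk X hX; rewrite -subr_ge0.
have -> : \tr X - \tr (kraus (monomial_mx swap k) X) =
    \sum_i (1 - k i * conjc (k i)) * X (swap_if swap i) (swap_if swap i).
  rewrite /mxtrace !big_ord2.
  by case: swap; rewrite /kraus !mulmx2E !mxE /swap_if ?ord2E ?eqxx; cbv beta iota;
    rewrite ?conjc0; ring.
apply: sumr_ge0 => i _; apply: mulr_ge0; last exact: psd_diag_ge0.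
by rewrite mulcJ_normc -(rmorph1 (real_complex R)) -rmorphB lecR subr_ge0.
Qed.

Lemma achievable_monomial swap (psi phi : 'cV[C]_2) (r : R) : 0 <= r ->
  (forall i, r * normc (phi i 0) ^+ 2 <= normc (psi (swap_if swap i) 0) ^+ 2) ->
  achievable psi phi r.
Proof.
move=> r_ge0 hr; set m := Num.sqrt r.
have m_ge0 : 0 <= m by apply: sqrtr_ge0.
have normc_mphi i : normc (m%:C * phi i 0) ^+ 2 = r * normc (phi i 0) ^+ 2.
  by rewrite normcM normc_real // exprMn sqr_sqrtr.
pose k i := m%:C * phi i 0 / psi (swap_if swap i) 0.
have hK : monomial_mx swap k *m psi = m%:C *: phi.
  apply/matrixP => i j; rewrite (ord1 j) monomial_mulmx [RHS]mxE /k.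
  have [psi0|psi_neq0] := eqVneq (psi (swap_if swap i) 0) 0; last by rewrite divfK.
  (* the junk value [x / 0 = 0] is harmless: [hr] forces [m * phi i 0 = 0] *)
  have h : normc (m%:C * phi i 0) ^+ 2 <= 0.
    by rewrite normc_mphi (le_trans (hr i)) // psi0 normc0 expr2 mulr0.
  rewrite psi0 mulr0; apply/esym/eq0_normc/eqP.
  by rewrite -sqrf_eq0 eq_le h sqr_ge0.
exists (kraus (monomial_mx swap k) : {linear _ -> _}); split; first split.
- exact: kraus_cp.
- apply: kraus_monomial_trace_nonincreasing => i.
  rewrite /k normcM normcV exprMn exprVn normc_mphi.
  have [->|psi_neq0] := eqVneq (normc (psi (swap_if swap i) 0)) 0.
    by rewrite expr0n invr0 mulr0.
  by rewrite ler_pdivrMr ?mul1r ?exprn_gt0 ?lt_def ?psi_neq0 ?normc_ge0.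
- exact: kraus_monomial_Z2_invariant.
- rewrite -[LHS]/(kraus _ (proj psi)) kraus_proj hK proj_scale.
  by rewrite mulcJ_normc normc_real // sqr_sqrtr.
Qed.

Lemma coh_ratio_achievable (psi phi : 'cV[C]_2) :
  pure_state psi -> pure_state phi -> coh psi < coh phi ->
  achievable psi phi (coh psi / coh phi).
Proof.
rewrite /pure_state /coh -mulf_div divff ?mul1r ?pnatr_eq0 // => psi1 phi1 lt_coh.
have x0 := sqr_ge0 (normc (psi 0 0)); have y0 := sqr_ge0 (normc (psi 1 0)).
have u0 := sqr_ge0 (normc (phi 0 0)); have v0 := sqr_ge0 (normc (phi 1 0)).
have lt_min : Num.min (normc (psi 0 0) ^+ 2) (normc (psi 1 0) ^+ 2)
            < Num.min (normc (phi 0 0) ^+ 2) (normc (phi 1 0) ^+ 2) by lra.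
have r_ge0 : 0 <= Num.min (normc (psi 0 0) ^+ 2) (normc (psi 1 0) ^+ 2)
                 / Num.min (normc (phi 0 0) ^+ 2) (normc (phi 1 0) ^+ 2).
  by rewrite divr_ge0 // le_min ?x0 ?y0 ?u0 ?v0.
case: (min_ratio_dominated x0 y0 u0 v0 psi1 phi1 lt_min) => -[r_u r_v];
  [apply: (achievable_monomial (swap := false))
  | apply: (achievable_monomial (swap := true))] => // i;
  by case: (ord2_cases i) => ->; rewrite /swap_if ?ord2E.
Qed.
End KrausOperations.

Section Covariance.
Variable R : rcfType.
Local Notation C := R[i].

Lemma piZ2_conjE (M : 'M[C]_2) i j :
  (piZ2 R *m M *m piZ2 R) i j = if i == j then M i j else - M i j.
Proof.
by case: (ord2_cases i) => ->; case: (ord2_cases j) => ->;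
  rewrite !mulmx2E !mxE /=; ring.
Qed.

Lemma piZ2_conj_delta i j :
  piZ2 R *m delta_mx i j *m piZ2 R = (if i == j then 1 else -1) *: delta_mx i j.
Proof.
apply/matrixP => a b; rewrite piZ2_conjE !mxE.
have [<-|_] := eqVneq i a; have [<-|_] := eqVneq j b;
  rewrite ?eqxx /= ?mulr0 ?oppr0 ?if_same //.
by case: (i == j); rewrite ?mulr1 ?mulN1r.
Qed.

(* |Omega><Omega| for the unnormalised maximally entangled vector
   |Omega> = |00> + |11>; the ancilla index comes first *)
Definition max_entangled (p q : 'I_2 * 'I_2) : C := ((p.2 == p.1) && (q.2 == q.1))%:R.

Lemma max_entangled_psd : psdF max_entangled.
Proof.
apply/psdFE => v; rewrite sum_pair2 !big_ord2 /max_entangled /=.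
apply: le_trans (mulcJ_ge0 (v (0, 0) + v (1, 1))) _.
by rewrite le_eqVlt; apply/orP; left; apply/eqP; rewrite conjcD; ring.
Qed.

Lemma ampl_max_entangled (E : 'M[C]_2 -> 'M[C]_2) i k j l :
  ampl E max_entangled (i, k) (j, l) = E (delta_mx i j) k l.
Proof. by rewrite /ampl; congr (E _ _ _); apply/matrixP => a b; rewrite !mxE. Qed.
End Covariance.

Section CovariantMap.
Variable R : rcfType.
Local Notation C := R[i].
Variable E : {linear 'M[C]_2 -> 'M[C]_2}.
Hypothesis E_Z2 : Z2_invariant E.

Lemma Z2_invariant_delta_entry i j k l :
  (i == j) != (k == l) -> E (delta_mx i j) k l = 0.
Proof.
have := congr1 (fun M : 'M[C]_2 => M k l) (E_Z2 (delta_mx i j)).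
rewrite /= piZ2_conj_delta linearZ piZ2_conjE mxE.
case: (i == j); case: (k == l) => //= + _; rewrite ?mul1r ?mulN1r.
- exact: eqN_eq0.
- by move/esym/eqN_eq0.
Qed.

Lemma Z2_delta_entries0 :
  (E (delta_mx 0 0) 0 1 = 0) * (E (delta_mx 0 0) 1 0 = 0)
  * (E (delta_mx 1 1) 0 1 = 0) * (E (delta_mx 1 1) 1 0 = 0)
  * (E (delta_mx 0 1) 0 0 = 0) * (E (delta_mx 0 1) 1 1 = 0)
  * (E (delta_mx 1 0) 0 0 = 0) * (E (delta_mx 1 0) 1 1 = 0).
Proof. by do !split; apply: Z2_invariant_delta_entry. Qed.

Lemma linear_mx2E (M : 'M[C]_2) k l :
  E M k l = \sum_i \sum_j M i j * E (delta_mx i j) k l.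
Proof.
rewrite {1}(matrix_sum_delta M) linear_sum summxE; apply: eq_bigr => i _.
by rewrite linear_sum summxE; apply: eq_bigr => j _; rewrite linearZ mxE.
Qed.

Lemma Z2_proj_diag (psi : 'cV[C]_2) k :
  E (proj psi) k k = (normc (psi 0 0) ^+ 2)%:C * E (delta_mx 0 0) k k
                   + (normc (psi 1 0) ^+ 2)%:C * E (delta_mx 1 1) k k.
Proof.
rewrite linear_mx2E !big_ord2 !projE -!mulcJ_normc.
by case: (ord2_cases k) => ->; rewrite !Z2_delta_entries0; ring.
Qed.

Lemma Z2_proj_offdiag (psi : 'cV[C]_2) k l : k != l ->
  E (proj psi) k l = psi 0 0 * conjc (psi 1 0) * E (delta_mx 0 1) k l
                   + psi 1 0 * conjc (psi 0 0) * E (delta_mx 1 0) k l.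
Proof.
rewrite linear_mx2E !big_ord2 !projE.
by case: (ord2_cases k) => ->; case: (ord2_cases l) => -> // _; rewrite !Z2_delta_entries0; ring.
Qed.

Hypothesis E_cp : completely_positive E.

Lemma Z2_choi_ge0 (s1 t1 s2 t2 : C) :
  0 <= conjc s1 * s1 * E (delta_mx 0 0) 0 0 + conjc t1 * t1 * E (delta_mx 1 1) 1 1
       + conjc s1 * t1 * E (delta_mx 0 1) 0 1 + conjc t1 * s1 * E (delta_mx 1 0) 1 0
       + conjc s2 * s2 * E (delta_mx 0 0) 1 1 + conjc t2 * t2 * E (delta_mx 1 1) 0 0
       + conjc s2 * t2 * E (delta_mx 0 1) 1 0 + conjc t2 * s2 * E (delta_mx 1 0) 0 1.
Proof.
pose w (p : 'I_2 * 'I_2) :=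
  if p.1 == 0 then (if p.2 == 0 then s1 else s2) else (if p.2 == 0 then t2 else t1).
have /psdFE/(_ w) := @E_cp 2 _ (@max_entangled_psd R).
rewrite sum_pair2 !big_ord2 !ampl_max_entangled !Z2_delta_entries0 /w /=.
by move/le_trans; apply; rewrite le_eqVlt; apply/orP; left; apply/eqP; ring.
Qed.

Lemma Z2_choi_diag_ge0 i k : 0 <= E (delta_mx i i) k k.
Proof.
case: (ord2_cases i) => ->; case: (ord2_cases k) => ->;
  [ have := Z2_choi_ge0 1 0 0 0 | have := Z2_choi_ge0 0 0 1 0
  | have := Z2_choi_ge0 0 0 0 1 | have := Z2_choi_ge0 0 1 0 0 ];
  by rewrite conjc0 conjc1 !(mul0r, mulr0, mul1r, addr0, add0r).
Qed.
End CovariantMap.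

Section UpperBound.
Variable R : rcfType.
Local Notation C := R[i].

Variables (E : {linear 'M[C]_2 -> 'M[C]_2}) (psi phi : 'cV[C]_2) (lam : R).
Hypotheses (E_op : Z2_operation E) (E_psi : E (proj psi) = lam%:C *: proj phi).

Let E_cp : completely_positive E. Proof. by case: E_op. Qed.
Let E_tni : trace_nonincreasing E. Proof. by case: E_op. Qed.
Let E_Z2 : Z2_invariant E. Proof. by case: E_op. Qed.

(* [p i k] is the probability that [E] maps |i><i| to |k><k| *)
Let p i k := complex.Re (E (delta_mx i i) k k).

Lemma Z2_delta_diagE i k : E (delta_mx i i) k k = (p i k)%:C.
Proof. exact/ge0_complexE/Z2_choi_diag_ge0. Qed.

Lemma Z2_transition_ge0 i k : 0 <= p i k.
Proof. by rewrite -ler0c -Z2_delta_diagE; apply: Z2_choi_diag_ge0. Qed.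

Lemma Z2_transition_sum_le1 i : p i 0 + p i 1 <= 1.
Proof.
have := E_tni (psd_delta_diag i); rewrite /mxtrace !big_ord2 !Z2_delta_diagE.
rewrite !mxE -real_complexD; case: (ord2_cases i) => -> /=;
  by rewrite ?addr0 ?add0r -(rmorph1 (real_complex R)) lecR.
Qed.

Local Notation x := (normc (psi 0 0) ^+ 2).
Local Notation y := (normc (psi 1 0) ^+ 2).
Local Notation u := (normc (phi 0 0) ^+ 2).
Local Notation v := (normc (phi 1 0) ^+ 2).

Lemma Z2_population_eq k : x * p 0 k + y * p 1 k = lam * normc (phi k 0) ^+ 2.
Proof.
apply: (@complexI R); rewrite -[LHS]/(_%:C) -[RHS]/(_%:C).
have := congr1 (fun M : 'M[C]_2 => M k k) E_psi.
rewrite /= (Z2_proj_diag E_Z2) !Z2_delta_diagE mxE projE mulcJ_normc.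
by rewrite real_complexD !real_complexM.
Qed.

Local Notation a := (psi 0 0).
Local Notation b := (psi 1 0).
Local Notation c := (phi 0 0).
Local Notation d := (phi 1 0).

Lemma Z2_coherence_ineq (al be ga de : R) :
  0 <= al ^+ 2 * be ^+ 2 * x * v * p 0 0 + al ^+ 2 * de ^+ 2 * x * u * p 0 1
       + be ^+ 2 * ga ^+ 2 * y * v * p 1 0 + ga ^+ 2 * de ^+ 2 * y * u * p 1 1
       - 2 * (al * be * ga * de) * lam * u * v.
Proof.
(* at this vector the off-diagonal part of the Choi form only involves the
   coherences of [E (proj psi) = lam%:C *: proj phi] *)
rewrite -ler0c; apply: le_trans (Z2_choi_ge0 E_Z2 E_cp
  (al%:C * be%:C * conjc (a * d)) (- (ga%:C * de%:C * conjc (b * c)))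
  (al%:C * de%:C * conjc (a * c)) (- (be%:C * ga%:C * conjc (b * d)))) _.
rewrite le_eqVlt; apply/orP; left; apply/eqP/eqP; rewrite -subr_eq0; apply/eqP.
transitivity (- (al%:C * be%:C * ga%:C * de%:C) *
  (conjc c * d * (E (proj psi) 0 1 - lam%:C * (c * conjc d))
   + c * conjc d * (E (proj psi) 1 0 - lam%:C * (d * conjc c)))).
  have normcE (z : C) : (normc z)%:C ^+ 2 = z * conjc z.
    by rewrite -real_complexX mulcJ_normc.
  rewrite !Z2_delta_diagE !(conjcM, conjcN, conjcK, conjc_real) !(Z2_proj_offdiag E_Z2) //.
  ring: (normcE a) (normcE b) (normcE c) (normcE d).
by rewrite E_psi ![(_ *: proj phi) _ _]mxE !projE !subrr; ring.
Qed.

Lemma Z2_operation_prob_le : 0 < coh phi -> lam <= coh psi / coh phi.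
Proof.
rewrite /coh => coh_gt0.
have min_gt0 : 0 < Num.min u v by rewrite -(pmulr_rgt0 _ (ltr0n _ 2)).
have x0 := sqr_ge0 (normc a); have y0 := sqr_ge0 (normc b).
have u0 := sqr_ge0 (normc c); have v0 := sqr_ge0 (normc d).
have p_ge0 := Z2_transition_ge0; have e0 := Z2_population_eq 0; have e1 := Z2_population_eq 1.
have [b0 b1] := choi_ineq_balance x0 y0 u0 v0 (p_ge0 0 0) (p_ge0 0 1) (p_ge0 1 0) (p_ge0 1 1)
  e0 e1 Z2_coherence_ineq.
have le_lam := balance_min_le x0 y0 min_gt0 (p_ge0 0 0) (p_ge0 0 1) (p_ge0 1 0) (p_ge0 1 1)
  (Z2_transition_sum_le1 0) (Z2_transition_sum_le1 1) e0 e1 b0 b1.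
have min_xy_ge0 : 0 <= Num.min x y by rewrite le_min x0 y0.
by rewrite ler_pdivlMr //; lra.
Qed.
End UpperBound.

Theorem theorem14 (R : rcfType) (psi phi : 'cV[R[i]]_2) :
  pure_state psi -> pure_state phi -> coh psi < coh phi ->
  is_max_prob psi phi (coh psi / coh phi).
Proof.
move=> psi1 phi1 lt_coh; split; first exact: coh_ratio_achievable.
have coh_phi_gt0 : 0 < coh phi.
  by apply: le_lt_trans lt_coh; rewrite mulr_ge0 // le_min !sqr_ge0.
by move=> lam [E [E_op E_psi]]; apply: Z2_operation_prob_le E_op E_psi coh_phi_gt0.
Qed.
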